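(* Let $(V_1, V_2)$ be a BCL pair on $\mathcal{H}$ such that $[V_2^*, V_1]$ is normal. Then \[ \operatorname{ran}[V_2^*, V_1] = \operatorname{ran}[V_1^*, V_2] \subseteq E_1, \] and $[V_2^*, V_1]|_{E_1^\perp} = [V_1^*, V_2]|_{E_1^\perp} = 0$.
   Context: All Hilbert spaces are complex and separable. An isometric pair is a pair $(V_1,V_2)$ of commuting isometries. An isometry $V$ is a shift if $V^{*m}\to0$ strongly. A BCL pair is an isometric pair with $V_1V_2$ a shift. $[V_2^*,V_1] := V_2^*V_1 - V_1V_2^*$ and $[V_1^*,V_2] := V_1^*V_2 - V_2V_1^*$. $C(V_1,V_2) := I - V_1V_1^* - V_2V_2^* + V_1V_2V_1^*V_2^*$ and $E_1 := \ker(C(V_1,V_2)-I)$. *)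

From HB Require Import structures.
From mathcomp Require Import all_boot all_order all_algebra.
From mathcomp Require Import reals complex.
From mathcomp Require Import classical_sets.
Set Implicit Arguments. Unset Strict Implicit. Unset Printing Implicit Defensive.
Import Order.TTheory GRing.Theory Num.Theory.
Local Open Scope ring_scope.

(* Norms are expressed through their squares: ||x||^2 = <x,x>. *)
Record HilbertSpace (R : realType) := {
  hcar :> lmodType R[i];
  inner : hcar -> hcar -> R[i];
  inner_linear : forall (a : R[i]) (x y z : hcar),
      inner (a *: x + y) z = a * inner x z + inner y z;
  inner_conj : forall x y : hcar, inner y x = (inner x y)^*;
  inner_ge0 : forall x : hcar, 0 <= inner x x;
  inner_definite : forall x : hcar, inner x x = 0 -> x = 0;
  complete : forall u : nat -> hcar,
      (forall eps : R[i], 0 < eps -> exists N : nat, forall m n : nat,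
          (N <= m)%N -> (N <= n)%N -> `|inner (u m - u n) (u m - u n)| < eps) ->
      exists l : hcar, forall eps : R[i], 0 < eps -> exists N : nat,
          forall n : nat, (N <= n)%N -> `|inner (u n - l) (u n - l)| < eps;
  separable : exists d : nat -> hcar, forall (x : hcar) (eps : R[i]), 0 < eps ->
      exists n : nat, `|inner (x - d n) (x - d n)| < eps
}.

Section Ops.
Variables (R : realType) (H : HilbertSpace R).

Definition is_adjoint (T Ts : H -> H) :=
  forall x y : H, inner (T x) y = inner x (Ts y).

Definition bounded_linear (T : H -> H) :=
  (forall (a : R[i]) (x y : H), T (a *: x + y) = a *: T x + T y) /\
  exists M : R[i], 0 <= M /\ forall x : H, inner (T x) (T x) <= M * inner x x.

Definition isometry (V : H -> H) :=
  bounded_linear V /\ forall x : H, inner (V x) (V x) = inner x x.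

Definition isometric_pair (V1 V2 : H -> H) :=
  isometry V1 /\ isometry V2 /\ forall x : H, V1 (V2 x) = V2 (V1 x).

Definition is_shift (V : H -> H) :=
  isometry V /\ exists Vs : H -> H, is_adjoint V Vs /\
    forall x : H, forall eps : R[i], 0 < eps -> exists N : nat,
      forall m : nat, (N <= m)%N ->
        `|inner (iter m Vs x) (iter m Vs x)| < eps.

Definition BCL_pair (V1 V2 : H -> H) :=
  isometric_pair V1 V2 /\ is_shift (fun x => V1 (V2 x)).

Definition normal_op (T : H -> H) :=
  bounded_linear T /\ exists Ts : H -> H, is_adjoint T Ts /\
    forall x : H, T (Ts x) = Ts (T x).

Definition commutator (A B : H -> H) : H -> H := fun x => A (B x) - B (A x).

Definition defect (V1 V2 V1s V2s : H -> H) : H -> H :=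
  fun x => x - V1 (V1s x) - V2 (V2s x) + V1 (V2 (V1s (V2s x))).

Definition ran (T : H -> H) : set H := [set y | exists x, T x = y].
Definition ker (T : H -> H) : set H := [set x | T x = 0].
Definition orth (S : set H) : set H := [set y | forall x, S x -> inner x y = 0].

End Ops.

From Pilot Require Import Defs.
From HB Require Import structures.
From mathcomp Require Import all_boot all_order all_algebra.
From mathcomp Require Import reals complex.
From mathcomp Require Import classical_sets boolp lra zify.
Set Implicit Arguments.
Unset Strict Implicit.
Unset Printing Implicit Defensive.
Import Order.TTheory GRing.Theory Num.Theory.
Local Open Scope ring_scope.
Local Open Scope classical_set_scope.

(* A := [V2^*, V1] has adjoint B := [V1^*, V2], so normality of A means
   A B = B A, whence ||A x|| = ||B x||.  For commuting isometries A V2 = 0 and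
   B V1 = 0, so A V1 = 0 as well; taking adjoints, V1^* B = V2^* B = 0, and
   vectors killed by V1^* and V2^* are fixed by C(V1,V2): ran B lies in E1.
   For x orthogonal to E1, ||A x||^2 = <x, B A x> = 0, and symmetrically for
   B once ran A = ran B is known.  That equality holds for any bounded normal
   operator, by a Douglas-type minimisation argument using completeness. *)

Section InnerProduct.
Context {R : realType} {H : HilbertSpace R}.
Implicit Types (x y z : H) (a : R[i]).

Lemma inner0l y : inner (0 : H) y = 0.
Proof.
have := inner_linear 1 (0 : H) 0 y; rewrite scaler0 addr0 mul1r => h.
by apply: (addrI (inner 0 y)); rewrite addr0 -h.
Qed.

Lemma innerDl x y z : inner (x + y) z = inner x z + inner y z.
Proof. by rewrite -[x]scale1r inner_linear mul1r scale1r. Qed.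

Lemma innerZl a x z : inner (a *: x) z = a * inner x z.
Proof. by rewrite -[a *: x]addr0 inner_linear inner0l addr0. Qed.

Lemma innerNl x z : inner (- x) z = - inner x z.
Proof. by rewrite -scaleN1r innerZl mulN1r. Qed.

Lemma innerBl x y z : inner (x - y) z = inner x z - inner y z.
Proof. by rewrite innerDl innerNl. Qed.

Lemma inner0r y : inner y (0 : H) = 0.
Proof. by rewrite inner_conj inner0l conjC0. Qed.

Lemma innerDr x y z : inner z (x + y) = inner z x + inner z y.
Proof. by rewrite !(inner_conj _ z) innerDl rmorphD. Qed.

Lemma innerZr a x z : inner z (a *: x) = a^* * inner z x.
Proof. by rewrite !(inner_conj _ z) innerZl rmorphM. Qed.

Lemma innerNr x z : inner z (- x) = - inner z x.
Proof. by rewrite !(inner_conj _ z) innerNl rmorphN. Qed.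

Lemma innerBr x y z : inner z (x - y) = inner z x - inner z y.
Proof. by rewrite innerDr innerNr. Qed.

Lemma inner_ext x y : (forall z, inner z x = inner z y) -> x = y.
Proof.
move=> eq_xy; apply/eqP; rewrite -subr_eq0; apply/eqP.
by apply: inner_definite; rewrite innerBr eq_xy subrr.
Qed.

Definition normsq x : R := complex.Re (inner x x).

Lemma normsqE x : inner x x = (normsq x)%:C%C.
Proof. by rewrite /normsq RRe_real // ger0_real // inner_ge0. Qed.

Lemma normsq_ge0 x : 0 <= normsq x.
Proof. by rewrite -lecR -normsqE inner_ge0. Qed.

Lemma normsq_eq0 x : normsq x = 0 -> x = 0.
Proof. by move=> x0; apply: inner_definite; rewrite normsqE x0. Qed.

Lemma ReJ (c : R[i]) : complex.Re c^* = complex.Re c.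
Proof. by case: c. Qed.

Lemma normsqD x y :
  normsq (x + y) = normsq x + normsq y + 2 * complex.Re (inner x y).
Proof.
rewrite /normsq innerDl !innerDr !raddfD /= [inner y x]inner_conj ReJ; lra.
Qed.

Lemma normsqN x : normsq (- x) = normsq x.
Proof. by rewrite /normsq innerNl innerNr opprK. Qed.

Lemma normsqB x y :
  normsq (x - y) = normsq x + normsq y - 2 * complex.Re (inner x y).
Proof. by rewrite normsqD normsqN innerNr raddfN /=; lra. Qed.

Lemma normsqZ (t : R) x : normsq (t%:C%C *: x) = t ^+ 2 * normsq x.
Proof.
rewrite /normsq innerZl innerZr; case: (inner x x) => a b /=.
by rewrite oppr0 !mul0r !subr0 mulrA expr2.
Qed.

Lemma Re_innerZr (t : R) x y :
  complex.Re (inner x (t%:C%C *: y)) = t * complex.Re (inner x y).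
Proof.
rewrite innerZr; case: (inner x y) => a b /=.
by rewrite oppr0 !mul0r subr0.
Qed.

Lemma parallelogram x y :
  normsq (x - y) + normsq (x + y) = 2 * normsq x + 2 * normsq y.
Proof. rewrite normsqB normsqD; lra. Qed.

Lemma normsqB_le x y : normsq (x - y) <= 2 * normsq x + 2 * normsq y.
Proof. have := parallelogram x y; have := normsq_ge0 (x + y); lra. Qed.

Lemma normsq_midpoint x y z : x + y = z + z ->
  normsq (x - y) = 2 * normsq x + 2 * normsq y - 4 * normsq z.
Proof.
move=> xyz; have := parallelogram x y.
rewrite xyz (normsqD z z) /normsq; lra.
Qed.

End InnerProduct.

Section Operators.
Context {R : realType} {H : HilbertSpace R}.
Implicit Types (x y z : H) (a : R[i]) (T S V Vs X Xs Y Ys : H -> H).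

Definition is_linear T := forall a x y, T (a *: x + y) = a *: T x + T y.

Section Linear.
Variables (T : H -> H) (linT : is_linear T).

Lemma lin0 : T 0 = 0.
Proof.
have := linT 1 0 0; rewrite scaler0 addr0 scale1r => h.
by apply: (addrI (T 0)); rewrite addr0 -h.
Qed.

Lemma linD x y : T (x + y) = T x + T y.
Proof. by have := linT 1 x y; rewrite !scale1r. Qed.

Lemma linZ a x : T (a *: x) = a *: T x.
Proof. by rewrite -[a *: x]addr0 linT lin0 addr0. Qed.

Lemma linN x : T (- x) = - T x.
Proof. by rewrite -scaleN1r linZ scaleN1r. Qed.

Lemma linB x y : T (x - y) = T x - T y.
Proof. by rewrite linD linN. Qed.

End Linear.

Lemma bounded_linear_bound T : bounded_linear T ->
  exists2 M : R, 0 < M & forall x, normsq (T x) <= M * normsq x.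
Proof.
move=> [_ [M [M_ge0 boundT]]]; have M_real : M = (complex.Re M)%:C%C.
  by rewrite RRe_real // ger0_real.
have ReM_ge0 : 0 <= complex.Re M by rewrite -lecR -M_real.
exists (complex.Re M + 1) => [|x]; first lra.
have := boundT x; rewrite !normsqE M_real -rmorphM lecR.
have := normsq_ge0 x; nra.
Qed.

Lemma adjoint_sym T S : is_adjoint T S -> is_adjoint S T.
Proof. by move=> adjTS x y; rewrite inner_conj -adjTS -inner_conj. Qed.

Lemma adjoint_linear T S : is_adjoint T S -> is_linear S.
Proof.
move=> adjTS a x y; apply: inner_ext => z.
by rewrite -adjTS innerDr innerZr !adjTS -innerZr -innerDr.
Qed.

Lemma adjoint_unique T S S' : is_adjoint T S -> is_adjoint T S' -> S =1 S'.
Proof. by move=> adjS adjS' y; apply: inner_ext => z; rewrite -adjS adjS'. Qed.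

Lemma commutator_adjoint X Xs Y Ys : is_adjoint X Xs -> is_adjoint Y Ys ->
  is_adjoint (commutator Xs Y) (commutator Ys X).
Proof.
move=> adjX adjY x y; rewrite /commutator innerBl innerBr.
by rewrite adjY !(adjoint_sym adjX) adjY.
Qed.

Lemma adjoint_comp_eq0 X Xs T S : is_adjoint X Xs -> is_adjoint T S ->
  (forall x, T (X x) = 0) -> forall y, Xs (S y) = 0.
Proof.
move=> adjX adjT TX0 y; apply: inner_ext => z.
by rewrite -adjX -adjT TX0 inner0l inner0r.
Qed.

(* Polarization: an isometry preserves the real parts of inner products, and
   then the imaginary parts since Im <x, y> = - Re <i x, y>. *)
Lemma isometry_inner V x y : Defs.isometry V -> inner (V x) (V y) = inner x y.
Proof.
move=> [[linV _] normV].
have normsqV u : normsq (V u) = normsq u by rewrite /normsq normV.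
have ReV u w : complex.Re (inner (V u) (V w)) = complex.Re (inner u w).
  by have := normsqV (u + w); rewrite (linD linV) !normsqD !normsqV; lra.
have := ReV ('i%C *: x) y; rewrite (linZ linV) !innerZl.
case: (inner x y) (inner (V x) (V y)) (ReV x y) => a b [c d] /= -> /=.
by rewrite !mul0r !mul1r !sub0r => /oppr_inj ->.
Qed.

Lemma isometryK V Vs :
  Defs.isometry V -> is_adjoint V Vs -> forall x, Vs (V x) = x.
Proof.
by move=> isoV adjV x; apply: inner_ext => z; rewrite -adjV isometry_inner.
Qed.

Lemma normal_normsq T S : is_adjoint T S -> (forall x, T (S x) = S (T x)) ->
  forall x, normsq (S x) = normsq (T x).
Proof.
move=> adjTS TS x.
by rewrite /normsq (adjoint_sym adjTS) TS -adjTS (inner_conj (T x)) ReJ.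
Qed.

Lemma normal_ker T S : is_adjoint T S -> (forall x, T (S x) = S (T x)) ->
  forall x, T x = 0 -> S x = 0.
Proof.
move=> adjTS TS x Tx0; apply: normsq_eq0.
by rewrite (normal_normsq adjTS TS) Tx0 /normsq inner0l.
Qed.

Lemma adjoint_orth_ran T S (E : set H) : is_adjoint T S -> ran S `<=` E ->
  forall x, orth E x -> T x = 0.
Proof.
move=> adjTS ranSE x xE; apply: inner_definite.
by rewrite adjTS inner_conj xE ?conjC0 //; apply: ranSE; exists (T x).
Qed.

End Operators.

Section Convergence.
Context {R : realType} {H : HilbertSpace R}.
Implicit Types (u : nat -> H) (l : H).

Definition cvg_to u l := forall e : R, 0 < e ->
  exists N, forall n, (N <= n)%N -> normsq (u n - l) < e.

Definition cauchy u := forall e : R, 0 < e ->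
  exists N, forall m n, (N <= m)%N -> (N <= n)%N -> normsq (u m - u n) < e.

Lemma normsq_ltC (x : H) (e : R[i]) : 0 < e ->
  (`|inner x x| < e) = (normsq x < complex.Re e).
Proof.
rewrite ger0_norm ?inner_ge0 // normsqE.
by case: e => a b; rewrite !ltcE /= => /andP [/eqP <- _]; rewrite eqxx.
Qed.

Lemma cauchy_cvg u : cauchy u -> exists l, cvg_to u l.
Proof.
move=> cauchy_u.
have [l ul] : exists l, forall e : R[i], 0 < e -> exists N, forall n,
    (N <= n)%N -> `|inner (u n - l) (u n - l)| < e.
  apply: complete => e e_gt0.
  have [|N uN] := cauchy_u (complex.Re e).
    by move: e_gt0; rewrite ltcE => /andP [].
  by exists N => m n mN nN; rewrite normsq_ltC // uN.
exists l => e e_gt0; have [|N uN] := ul e%:C%C; first by rewrite ltcR.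
by exists N => n nN; move: (uN n nN); rewrite normsq_ltC ?ltcR.
Qed.

Lemma cvg_to_unique u l l' : cvg_to u l -> cvg_to u l' -> l = l'.
Proof.
move=> ul ul'; apply/eqP; rewrite -subr_eq0; apply/eqP/normsq_eq0/eqP.
rewrite eq_le normsq_ge0 andbT leNgt; apply/negP => dist_gt0.
have e_gt0 : 0 < normsq (l - l') / 4 by rewrite divr_gt0.
have [N uN] := ul _ e_gt0; have [N' uN'] := ul' _ e_gt0.
have := uN (maxn N N') (leq_maxl _ _); have := uN' (maxn N N') (leq_maxr _ _).
have := normsqB_le (u (maxn N N') - l') (u (maxn N N') - l).
by rewrite opprB addrC addrA subrK; lra.
Qed.

Lemma cvg_to_bounded T (M : R) u l : is_linear T -> 0 < M ->
  (forall x, normsq (T x) <= M * normsq x) ->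
  cvg_to u l -> cvg_to (fun n => T (u n)) (T l).
Proof.
move=> linT M_gt0 boundT ul e e_gt0.
have [N uN] := ul (e / M) (divr_gt0 e_gt0 M_gt0).
exists N => n nN; rewrite -(linB linT); apply: (le_lt_trans (boundT _)).
by rewrite -ltr_pdivlMl // mulrC uN.
Qed.

Lemma inv_succ_lt (c e : R) : 0 <= c -> 0 < e ->
  exists N, forall n, (N <= n)%N -> c / n.+1%:R < e.
Proof.
move=> c_ge0 e_gt0; exists (Num.Def.archi_bound (c / e)) => n nN.
have := archi_boundP (divr_ge0 c_ge0 (ltW e_gt0)).
have : (Num.Def.archi_bound (c / e))%:R <= n.+1%:R :> R by rewrite ler_nat; lia.
rewrite !ltr_pdivrMr ?ltr0n //; nra.
Qed.

Lemma cvg_to_le (c : R) u l : 0 <= c ->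
  (forall n, normsq (u n - l) <= c / n.+1%:R) -> cvg_to u l.
Proof.
move=> c_ge0 ul e e_gt0; have [N cN] := inv_succ_lt c_ge0 e_gt0.
by exists N => n nN; apply: le_lt_trans (ul n) (cN n nN).
Qed.

Lemma cauchy_le (c : R) u : 0 <= c ->
  (forall m n, normsq (u m - u n) <= c / m.+1%:R + c / n.+1%:R) -> cauchy u.
Proof.
move=> c_ge0 uc e e_gt0; have [|N cN] := inv_succ_lt c_ge0 (_ : 0 < e / 2).
  by rewrite divr_gt0.
exists N => m n mN nN; have := uc m n; have := cN m mN; have := cN n nN.
by move: (c / m.+1%:R) (c / n.+1%:R) => a b; lra.
Qed.

End Convergence.

Lemma minimizing_seq (R : realType) (I : Type) (f : I -> R) (i0 : I) :
  (forall i, 0 <= f i) ->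
  exists d, (forall i, d <= f i) /\
    exists u : nat -> I, forall n, f (u n) < d + n.+1%:R^-1.
Proof.
move=> f_ge0; pose E := [set r | exists i, r = f i].
have E_lb : has_lbound E by exists 0 => r [i ->].
have E_inf : has_inf E by split; [exists (f i0), i0 | exact: E_lb].
exists (inf E); split => [i|]; first by apply: ge_inf => //; exists i.
have [|u fu] := @choice _ _ (fun n i => f i < inf E + n.+1%:R^-1).
  move=> n; have eps_gt0 : 0 < n.+1%:R^-1 :> R by rewrite invr_gt0 ltr0n.
  by have [r [i ->] fi] := inf_adherent eps_gt0 E_inf; exists i.
by exists u.
Qed.

Section NormalRange.
Context {R : realType} {H : HilbertSpace R}.
Variables (T S : H -> H) (M : R).
Hypotheses (adjTS : is_adjoint T S) (TS_comm : forall x, T (S x) = S (T x)).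
Hypotheses (M_gt0 : 0 < M) (boundT : forall x, normsq (T x) <= M * normsq x).

Let linS : is_linear S := adjoint_linear adjTS.
Let linT : is_linear T := adjoint_linear (adjoint_sym adjTS).

Let boundS x : normsq (S x) <= M * normsq x.
Proof. by rewrite (normal_normsq adjTS TS_comm). Qed.

Section Minimizer.
Variables (y : H) (d : R).
Hypothesis d_min : forall x, d <= normsq (y - S x).

Lemma midpoint_le x x' : normsq (S x - S x') <=
  2 * (normsq (y - S x) - d) + 2 * (normsq (y - S x') - d).
Proof.
pose m := 2^-1 *: (x + x').
have Sm : S m + S m = S x + S x'.
  have half : 2^-1 + 2^-1 = 1 :> R[i] by rewrite -div1r -splitr.
  by rewrite -(linD linS) /m -scalerDl half scale1r (linD linS).
have mid : (y - S x) + (y - S x') = (y - S m) + (y - S m).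
  by rewrite addrACA -opprD -Sm opprD addrACA.
have -> : normsq (S x - S x') = normsq ((y - S x) - (y - S x')).
  by rewrite -normsqN opprB [in RHS]opprB [in RHS]addrC addrA subrK.
by have := d_min m; rewrite (normsq_midpoint mid); lra.
Qed.

Lemma residual_le x : normsq (T (y - S x)) <= M * (normsq (y - S x) - d).
Proof.
(* Test the minimality of d in the direction M^-1 T (y - S x). *)
set r := y - S x; set q := T r; pose t := M^-1.
have := d_min (x + t%:C%C *: q).
rewrite (linD linS) (linZ linS) opprD addrA -/r normsqB normsqZ Re_innerZr.
have -> : inner r (S q) = inner q q by rewrite -adjTS.
have tM : t * M = 1 by rewrite mulVf ?gt_eqF.
have t_gt0 : 0 < t by rewrite invr_gt0.
have tSq : t ^+ 2 * normsq (S q) <= t * normsq q.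
  rewrite expr2 -mulrA ler_pM2l //.
  by rewrite (le_trans (ler_wpM2l (ltW t_gt0) (boundS q))) // mulrA tM mul1r.
have -> : normsq q = M * (t * normsq q) by rewrite mulrA (mulrC M) tM mul1r.
by rewrite ler_pM2l // -/(normsq q); lra.
Qed.

End Minimizer.

(* Douglas-type argument: along a sequence (x_n) minimising ||y - S x||, the
   S x_n, hence (by normality) the T x_n, form a Cauchy sequence, and the limit
   z of T x_n satisfies S z = lim T (S x_n) = T y. *)
Lemma normal_ran_subset : ran T `<=` ran S.
Proof.
move=> _ [y <-].
have [d [d_min [xs xs_min]]] :=
  @minimizing_seq _ _ (fun x => normsq (y - S x)) 0 (fun x => normsq_ge0 _).
have [z Txs_z] : exists z, cvg_to (fun n => T (xs n)) z.
  apply: cauchy_cvg; apply: (@cauchy_le _ _ 2) => // m n.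
  rewrite -(linB linT) -(normal_normsq adjTS TS_comm) (linB linS).
  have := midpoint_le d_min (xs m) (xs n); have := xs_min m; have := xs_min n.
  by move: (m.+1%:R^-1) (n.+1%:R^-1) => a b; lra.
exists z; apply: (@cvg_to_unique _ _ (fun n => S (T (xs n)))).
  exact: cvg_to_bounded linS M_gt0 boundS Txs_z.
apply: (@cvg_to_le _ _ M) => [|n]; first exact: ltW.
rewrite -TS_comm -normsqN opprB -(linB linT).
apply: le_trans (residual_le d_min (xs n)) _; rewrite ler_pM2l //.
by have := xs_min n; move: (n.+1%:R^-1) => a; lra.
Qed.

End NormalRange.

Section IsometricPair.
Context {R : realType} {H : HilbertSpace R}.
Variables (V1 V2 V1s V2s : H -> H).
Hypotheses (isoV1 : Defs.isometry V1) (isoV2 : Defs.isometry V2).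
Hypothesis V12 : forall x, V1 (V2 x) = V2 (V1 x).
Hypotheses (adj1 : is_adjoint V1 V1s) (adj2 : is_adjoint V2 V2s).

Local Notation A := (commutator V2s V1).
Local Notation B := (commutator V1s V2).

Let adjAB : is_adjoint A B := commutator_adjoint adj2 adj1.

Lemma commutator_V2_eq0 x : A (V2 x) = 0.
Proof. by rewrite /commutator V12 !(isometryK isoV2 adj2) subrr. Qed.

Lemma commutator_V1_eq0 x : B (V1 x) = 0.
Proof. by rewrite /commutator -V12 !(isometryK isoV1 adj1) subrr. Qed.

Lemma defect_fixed w : V1s w = 0 -> V2s w = 0 -> defect V1 V2 V1s V2s w = w.
Proof.
move=> V1sw V2sw; rewrite /defect V2sw V1sw (lin0 (adjoint_linear adj1)).
by rewrite (lin0 isoV2.1.1) (lin0 isoV1.1.1) !subr0 addr0.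
Qed.

Lemma commutator_ran_defect_fixed : (forall x, A (B x) = B (A x)) ->
  ran B `<=` ker (fun x => defect V1 V2 V1s V2s x - x).
Proof.
move=> AB _ [y <-]; apply/eqP; rewrite subr_eq0; apply/eqP.
have A_V1 x : A (V1 x) = 0.
  apply: normal_ker (adjoint_sym adjAB) _ _ (commutator_V1_eq0 x).
  by move=> z; rewrite AB.
apply: defect_fixed.
  exact: adjoint_comp_eq0 adj1 adjAB A_V1 y.
exact: adjoint_comp_eq0 adj2 adjAB commutator_V2_eq0 y.
Qed.

End IsometricPair.

Theorem lemma4p2 (R : realType) (H : HilbertSpace R) (V1 V2 V1s V2s : H -> H) :
  BCL_pair V1 V2 ->
  is_adjoint V1 V1s -> is_adjoint V2 V2s ->
  normal_op (commutator V2s V1) ->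
  let E1 := ker (fun x => defect V1 V2 V1s V2s x - x) in
  ran (commutator V2s V1) = ran (commutator V1s V2) /\
  ran (commutator V1s V2) `<=` E1 /\
  (forall x : H, orth E1 x -> commutator V2s V1 x = 0) /\
  (forall x : H, orth E1 x -> commutator V1s V2 x = 0).
Proof.
move=> [[isoV1 [isoV2 V12]] _] adj1 adj2 [A_bdd [As [adjAs AAs]]] E1.
set A := commutator V2s V1; set B := commutator V1s V2.
have adjAB : is_adjoint A B := commutator_adjoint adj2 adj1.
have AB x : A (B x) = B (A x) by rewrite -!(adjoint_unique adjAs adjAB).
have BA x : B (A x) = A (B x) by rewrite AB.
have [M M_gt0 boundA] := bounded_linear_bound A_bdd.
have boundB x : normsq (B x) <= M * normsq x.
  by rewrite (normal_normsq adjAB AB).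
have ranAB : ran A = ran B.
  apply/seteqP; split; first exact: normal_ran_subset adjAB AB M_gt0 boundA.
  exact: normal_ran_subset (adjoint_sym adjAB) BA M_gt0 boundB.
have ranB_E1 : ran B `<=` E1 :=
  commutator_ran_defect_fixed isoV1 isoV2 V12 adj1 adj2 AB.
split=> //; split=> //; split; first exact: adjoint_orth_ran adjAB ranB_E1.
by apply: adjoint_orth_ran (adjoint_sym adjAB) _; rewrite ranAB.
Qed.
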